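(* Let $k$ be a field of characteristic $0$, $n\geq3$, and let $\phi$ be a quadratic form over $k$ in $n-1$ variables such that $\psi=\langle1\rangle\perp(-\phi)$ is a regular anisotropic form. Let $Q^\psi\subset\mathbb A^n_k$ be the hypersurface $x_1^2-\phi(x_2,\dots,x_n)-1=0$. Let $(R,m,\kappa)$ be a discrete valuation ring containing $k$, with fraction field $K$ and valuation $v$. Let $f\in Q^\psi(K)$ with $f_i=f^*(x_i)$, and suppose $\phi_\kappa$ is anisotropic. (1) If $f$ lifts to $Q^\psi({\rm Spec}\,R)$, then both $v(f_1-1)$ and $v(f_1+1)$ are even. (2) If $f$ does not lift to $Q^\psi({\rm Spec}\,R)$, then $v(f_1)<0$ and $v(f_1)=\min\{v(f_2),\dots,v(f_n)\}$.
   Context: $\phi_\kappa$ is the base change of $\phi$ to the residue field $\kappa$; $\langle1\rangle$ is the form $x^2$ and $\perp$ the orthogonal sum. *)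

From HB Require Import structures.
From mathcomp Require Import all_boot all_order all_algebra.
Set Implicit Arguments. Unset Strict Implicit. Unset Printing Implicit Defensive.
Import Order.TTheory GRing.Theory Num.Theory.
Local Open Scope ring_scope.

Definition qform (R : comNzRingType) (m : nat) (A : 'M[R]_m) (x : 'rV[R]_m) : R :=
  (x *m A *m x^T) 0 0.

Definition anisotropic (R : comNzRingType) (m : nat) (A : 'M[R]_m) : Prop :=
  forall x : 'rV[R]_m, qform A x = 0 -> x = 0.

Definition regular (R : comNzRingType) (m : nat) (A : 'M[R]_m) : Prop :=
  \det A != 0.

(* Gram matrix of psi = <1> _|_ (-phi), in the variables (x_1, x_2..x_n). *)
Definition psi_mx (R : comNzRingType) (m : nat) (A : 'M[R]_m) : 'M[R]_(1 + m) :=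
  block_mx (1%:M : 'M[R]_1) 0 0 (- A).

(* A normalized discrete valuation on the field K, given by its values on K^x
   (the value of v at 0 is irrelevant; v(0) = +oo by convention). *)
Record dvaluation (K : fieldType) (v : K -> int) : Prop := {
  dv_mul : forall x y : K, x != 0 -> y != 0 -> v (x * y) = v x + v y;
  dv_add : forall x y : K, x != 0 -> y != 0 -> x + y != 0 ->
             Num.min (v x) (v y) <= v (x + y);
  dv_unif : exists p : K, p != 0 /\ v p = 1 }.

Definition inR (K : fieldType) (v : K -> int) (x : K) : bool := (x == 0) || (0 <= v x).
Definition inM (K : fieldType) (v : K -> int) (x : K) : bool := (x == 0) || (0 < v x).

(* phi_kappa anisotropic: if x in R^m reduces to a zero of phi_kappa,
   i.e. phi(x) in m, then x reduces to 0, i.e. all x_i in m. *)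
Definition residue_anisotropic (k K : fieldType) (iota : {rmorphism k -> K})
    (v : K -> int) (m : nat) (A : 'M[k]_m) : Prop :=
  forall x : 'rV[K]_m, (forall i, inR v (x 0 i)) ->
    inM v (qform (map_mx iota A) x) -> forall i, inM v (x 0 i).

From HB Require Import structures.
From mathcomp Require Import all_boot all_order all_algebra zify.
Import Order.TTheory GRing.Theory Num.Theory.
Local Open Scope ring_scope.

(* Residue anisotropy of phi says that phi(y) is a unit of R for every
   primitive y in R^m; scaling a nonzero x in K^m to a primitive vector gives
   v(phi(x)) = 2 min_i v(x_i).  If f1 is integral, then
   phi(g) = (f1 - 1)(f1 + 1) and (f1 + 1) - (f1 - 1) = 2 is a unit, so one
   factor is a unit and the other has the even valuation v(phi(g)).  If f is
   not integral, neither is g (else f1^2 = phi(g) + 1 would be), so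
   v(phi(g)) = 2 min_i v(g_i) < 0 and hence v(f1^2) = v(phi(g)). *)

Set Implicit Arguments.
Unset Strict Implicit.

Lemma odd_absz_mul2 (t : int) : ~~ odd `|t *+ 2|.
Proof. by rewrite -mulr_natr abszM oddM andbF. Qed.

Section Valuation.

Variables (K : fieldType) (v : K -> int).
Hypothesis hv : dvaluation v.

Lemma valuation1 : v 1 = 0.
Proof.
have := dv_mul hv (oner_neq0 K) (oner_neq0 K).
by rewrite mulr1; set a := v 1; lia.
Qed.

Lemma valuationN1 : v (-1) = 0.
Proof.
have n1 : (-1 : K) != 0 by rewrite oppr_eq0 oner_neq0.
by have := dv_mul hv n1 n1; rewrite mulrNN mulr1 valuation1; set a := v (-1); lia.
Qed.

Lemma valuationN x : x != 0 -> v (- x) = v x.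
Proof.
move=> x0; have n1 : (-1 : K) != 0 by rewrite oppr_eq0 oner_neq0.
by rewrite -mulN1r (dv_mul hv n1 x0) valuationN1 add0r.
Qed.

Lemma valuationV x : x != 0 -> v x^-1 = - v x.
Proof.
move=> x0; have := dv_mul hv x0 (invr_neq0 x0).
by rewrite mulfV // valuation1; set a := v x; set b := v x^-1; lia.
Qed.

Lemma valuationX x n : x != 0 -> v (x ^+ n) = v x *+ n.
Proof.
move=> x0; elim: n => [|n IH]; first by rewrite expr0 valuation1.
by rewrite exprS (dv_mul hv x0) ?expf_neq0 // IH mulrS.
Qed.

Lemma valuation_surj (t : int) : exists2 c, c != 0 & v c = t.
Proof.
have [p [p0 vp]] := dv_unif hv.
case: t => n.
  by exists (p ^+ n); [exact: expf_neq0 | rewrite valuationX // vp natz].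
have pn0 : p ^+ n.+1 != 0 by exact: expf_neq0.
by exists (p ^+ n.+1)^-1; rewrite ?invr_eq0 // valuationV // valuationX // vp natz NegzE.
Qed.

Lemma valuationD_lt x y :
  x != 0 -> y != 0 -> v x < v y -> x + y != 0 /\ v (x + y) = v x.
Proof.
move=> x0 y0 lt_xy.
have xy0 : x + y != 0.
  by apply: contraTneq lt_xy => /eqP; rewrite addr_eq0 => /eqP->; rewrite valuationN // ltxx.
split=> //; apply/eqP; rewrite eq_le.
have := dv_add hv x0 y0 xy0; rewrite (min_l (ltW lt_xy)) => -> /=.
have Ny0 : - y != 0 by rewrite oppr_eq0.
have := dv_add hv xy0 Ny0; rewrite addrK valuationN // ge_min andbT => /(_ x0).
by case/orP=> // /(lt_le_trans lt_xy); rewrite ltxx.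
Qed.

Lemma inR0 : inR v 0.
Proof. by rewrite /inR eqxx. Qed.

Lemma inR1 : inR v 1.
Proof. by rewrite /inR valuation1 lexx orbT. Qed.

Lemma inRN x : inR v x -> inR v (- x).
Proof.
have [->|x0] := eqVneq x 0; first by rewrite oppr0.
by rewrite /inR oppr_eq0 (negbTE x0) valuationN.
Qed.

Lemma inRD x y : inR v x -> inR v y -> inR v (x + y).
Proof.
have [->|x0] := eqVneq x 0; first by rewrite add0r.
have [->|y0] := eqVneq y 0; first by rewrite addr0.
have [->|xy0] := eqVneq (x + y) 0; first by rewrite inR0.
rewrite /inR (negbTE x0) (negbTE y0) (negbTE xy0) /= => vx vy.
by apply: le_trans (dv_add hv x0 y0 xy0); rewrite le_min vx vy.
Qed.

Lemma inRM x y : inR v x -> inR v y -> inR v (x * y).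
Proof.
have [->|x0] := eqVneq x 0; first by rewrite mul0r.
have [->|y0] := eqVneq y 0; first by rewrite mulr0.
rewrite /inR mulf_eq0 (negbTE x0) (negbTE y0) /= (dv_mul hv x0 y0).
exact: addr_ge0.
Qed.

Lemma inR_sum (I : finType) (F : I -> K) :
  (forall i, inR v (F i)) -> inR v (\sum_i F i).
Proof. by move=> FR; apply: (big_ind (inR v)) => //; [apply: inR0 | apply: inRD]. Qed.

Lemma inRX_inv x n : inR v (x ^+ n.+1) -> inR v x.
Proof.
have [->|x0] := eqVneq x 0; first by rewrite inR0.
by rewrite /inR expf_eq0 /= (negbTE x0) /= valuationX // pmulrn_lge0.
Qed.

Lemma unit_of_subr_unit a b : inR v a -> inR v b ->
  b - a != 0 -> v (b - a) = 0 ->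
  (a != 0 /\ v a = 0) \/ (b != 0 /\ v b = 0).
Proof.
have [-> _ _|a0] := eqVneq a 0; first by rewrite subr0; right.
have [-> _ _|b0] := eqVneq b 0; first by rewrite sub0r oppr_eq0 valuationN //; left.
rewrite /inR (negbTE a0) (negbTE b0) /= => va vb ba0 vba.
have Na0 : - a != 0 by rewrite oppr_eq0.
have := dv_add hv b0 Na0 ba0; rewrite vba valuationN // ge_min.
by case/orP=> [vb0|va0]; [right | left]; split=> //; apply/eqP; rewrite eq_le ?vb0 ?va0.
Qed.

End Valuation.

Lemma exists_min_valuation (R : nmodType) (v : R -> int) m (x : 'rV[R]_m) :
  x != 0 ->
  exists i, x 0 i != 0 /\ forall j, x 0 j != 0 -> v (x 0 i) <= v (x 0 j).
Proof.
move=> x0; have [i0 xi0] : exists i, x 0 i != 0.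
  apply/existsP; apply: contraNT x0; rewrite negb_exists => /forallP x_eq0.
  by apply/eqP/rowP => j; rewrite mxE; apply/eqP; rewrite -[_ == _]negbK x_eq0.
have [i xi min_i] := @arg_minP _ _ _ i0 (fun i => x 0 i != 0) (fun i => v (x 0 i)) xi0.
by exists i.
Qed.

Lemma qformE (K : comNzRingType) m (B : 'M[K]_m) x :
  qform B x = \sum_j (\sum_l x 0 l * B l j) * x 0 j.
Proof. by rewrite /qform !mxE; apply: eq_bigr => j _; rewrite !mxE. Qed.

Lemma qform0 (K : comNzRingType) m (B : 'M[K]_m) : qform B 0 = 0.
Proof. by rewrite /qform !mul0mx mxE. Qed.

Lemma qformZ (K : comNzRingType) m (B : 'M[K]_m) c x :
  qform B (c *: x) = c ^+ 2 * qform B x.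
Proof.
by rewrite /qform -!scalemxAl linearZ /= -scalemxAr scalerA !mxE expr2.
Qed.

Section ResidueAnisotropic.

Variables (K : fieldType) (v : K -> int) (m : nat) (B : 'M[K]_m).
Hypothesis hv : dvaluation v.
Hypothesis BR : forall i j, inR v (B i j).
Hypothesis B_res_aniso : forall x : 'rV[K]_m, (forall i, inR v (x 0 i)) ->
  inM v (qform B x) -> forall i, inM v (x 0 i).

Lemma qform_inR (x : 'rV[K]_m) : (forall i, inR v (x 0 i)) -> inR v (qform B x).
Proof.
move=> xR; rewrite qformE; apply: inR_sum => // j; apply: inRM => //.
by apply: inR_sum => // l; apply: inRM.
Qed.

Lemma qform_valuation (x : 'rV[K]_m) : x != 0 -> exists i, [/\ x 0 i != 0,
  forall j, x 0 j != 0 -> v (x 0 i) <= v (x 0 j),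
  qform B x != 0 & v (qform B x) = v (x 0 i) *+ 2].
Proof.
move=> x0; have [i [xi0 min_i]] := exists_min_valuation v x0; exists i.
have [c c0 vc] := valuation_surj hv (- v (x 0 i)).
have cxR j : inR v ((c *: x) 0 j).
  rewrite /inR mxE mulf_eq0 (negbTE c0) /=.
  have [//|xj0] := eqVneq (x 0 j) 0.
  by rewrite (dv_mul hv c0 xj0) vc addrC subr_ge0 min_i ?orbT.
have cxi_unit : ~~ inM v ((c *: x) 0 i).
  by rewrite /inM mxE mulf_eq0 (negbTE c0) (negbTE xi0) (dv_mul hv c0 xi0) vc addNr ltxx.
have q_unit : ~~ inM v (qform B (c *: x)).
  by apply: contra cxi_unit => /B_res_aniso; apply.
have [qcx0 vqcx] : qform B (c *: x) != 0 /\ v (qform B (c *: x)) = 0.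
  move: q_unit (qform_inR cxR); rewrite /inM /inR negb_or -leNgt => /andP[q0 le0].
  by rewrite (negbTE q0) /= => ge0; split=> //; apply/eqP; rewrite eq_le le0.
have c2 : c ^+ 2 != 0 by rewrite expf_neq0.
move: qcx0 vqcx; rewrite qformZ mulf_eq0 negb_or c2 /= => q0.
rewrite (dv_mul hv c2 q0) valuationX // vc => vq.
by split=> //; move: vq; rewrite !mulr2n; set a := v (qform B x); set t := v (x 0 i); lia.
Qed.

Lemma qform_valuation_even (x : 'rV[K]_m) :
  qform B x != 0 -> ~~ odd `|v (qform B x)|.
Proof.
have [->|x0] := eqVneq x 0; first by rewrite qform0 eqxx.
by have [i [_ _ _ ->]] := qform_valuation x0; rewrite odd_absz_mul2.
Qed.

Variables (f1 : K) (g : 'rV[K]_m).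
Hypothesis on_quadric : f1 ^+ 2 - qform B g - 1 = 0.

Let sqr_f1 : f1 ^+ 2 = qform B g + 1.
Proof. by apply/eqP; rewrite -subr_eq0 opprD addrA on_quadric. Qed.

Lemma lift_valuations_even :
  (2%:R : K) != 0 -> v 2%:R = 0 -> inR v f1 ->
  (f1 - 1 != 0 -> ~~ odd `|v (f1 - 1)|) /\
  (f1 + 1 != 0 -> ~~ odd `|v (f1 + 1)|).
Proof.
move=> two0 v2 f1R.
have prod_q : (f1 - 1) * (f1 + 1) = qform B g.
  by rewrite -subr_sqr expr1n sqr_f1 addrK.
have even_cofactor a b : a != 0 -> v a = 0 -> a * b = qform B g ->
    b != 0 -> ~~ odd `|v b|.
  move=> a0 va ab b0; have := @qform_valuation_even g.
  by rewrite -ab (dv_mul hv a0 b0) va add0r; apply; rewrite mulf_neq0.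
have diff2 : (f1 + 1) - (f1 - 1) = 2%:R by rewrite opprB addrC subrKA.
have aR : inR v (f1 - 1) by rewrite inRD ?inRN ?inR1.
have bR : inR v (f1 + 1) by rewrite inRD ?inR1.
have diff2_0 : (f1 + 1) - (f1 - 1) != 0 by rewrite diff2.
have [[a0 va]|[b0 vb]] := unit_of_subr_unit hv aR bR diff2_0 (etrans (congr1 v diff2) v2).
- split=> [_|]; [by rewrite va | exact: even_cofactor a0 va prod_q].
- split=> [|_]; [by apply: even_cofactor b0 vb _; rewrite mulrC | by rewrite vb].
Qed.

Lemma nonlift_pole : ~ (inR v f1 /\ (forall i, inR v (g 0 i))) ->
  [/\ f1 != 0, v f1 < 0,
      (exists i, g 0 i != 0 /\ v (g 0 i) = v f1) &
      (forall i, g 0 i != 0 -> v f1 <= v (g 0 i))].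
Proof.
move=> nonlift.
have gNR : ~ forall i, inR v (g 0 i).
  move=> gR; apply: nonlift; split=> //; apply: (@inRX_inv _ _ hv _ 1).
  by rewrite sqr_f1 inRD ?qform_inR ?inR1.
have g0 : g != 0 by apply: contra_notN gNR => /eqP-> i; rewrite mxE inR0.
have [i [gi0 min_i q0 vq]] := qform_valuation g0.
have vgi_neg : v (g 0 i) < 0.
  rewrite ltNge; apply: contra_notN gNR => vgi_ge0 j.
  rewrite /inR; have [//|gj0] := eqVneq (g 0 j) 0.
  by rewrite (le_trans vgi_ge0 (min_i j gj0)) orbT.
have vq_neg : v (qform B g) < v 1.
  by rewrite (valuation1 hv) vq pmulrn_llt0.
have [sqr0 vsqr] := valuationD_lt hv q0 (oner_neq0 K) vq_neg.
rewrite -sqr_f1 in sqr0 vsqr.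
have f10 : f1 != 0 by apply: contraNneq sqr0 => ->; rewrite expr0n.
have vf1 : v f1 = v (g 0 i).
  by move: vsqr; rewrite (valuationX hv) // vq !mulr2n; set a := v f1; lia.
split=> //; first by rewrite vf1.
- by exists i.
- by move=> j gj0; rewrite vf1 min_i.
Qed.

End ResidueAnisotropic.

Lemma valuation_rmorph (k K : fieldType) (iota : {rmorphism k -> K})
    (v : K -> int) : dvaluation v ->
  (forall c : k, c != 0 -> 0 <= v (iota c)) ->
  forall c : k, c != 0 -> v (iota c) = 0.
Proof.
move=> hv iotaR c c0; have := iotaR _ (invr_neq0 c0).
rewrite fmorphV valuationV ?fmorph_eq0 // oppr_ge0 => le0.
by apply/eqP; rewrite eq_le le0 iotaR.
Qed.

Unset Implicit Arguments.

Theorem lemma4p11 (k : fieldType) (m : nat) (A : 'M[k]_m)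
    (K : fieldType) (iota : {rmorphism k -> K}) (v : K -> int)
    (f1 : K) (g : 'rV[K]_m) :
  [pchar k] =i pred0 ->
  (2 <= m)%N ->
  A^T = A ->
  regular (psi_mx A) ->
  anisotropic (psi_mx A) ->
  dvaluation v ->
  (forall c : k, c != 0 -> 0 <= v (iota c)) ->
  f1 ^+ 2 - qform (map_mx iota A) g - 1 = 0 ->
  residue_anisotropic iota v A ->
  ((inR v f1 /\ (forall i, inR v (g 0 i))) ->
     (f1 - 1 != 0 -> ~~ odd (absz (v (f1 - 1)))) /\
     (f1 + 1 != 0 -> ~~ odd (absz (v (f1 + 1))))) /\
  (~ (inR v f1 /\ (forall i, inR v (g 0 i))) ->
     [/\ f1 != 0, v f1 < 0,
         (exists i, g 0 i != 0 /\ v (g 0 i) = v f1) &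
         (forall i, g 0 i != 0 -> v f1 <= v (g 0 i))]).
Proof.
move=> char0 _ _ _ _ hv iotaR on_quadric res_aniso.
have AR i j : inR v (map_mx iota A i j).
  rewrite /inR mxE; have [->|a0] := eqVneq (A i j) 0; first by rewrite rmorph0 eqxx.
  by rewrite iotaR ?orbT.
have two0 : (2%:R : k) != 0 by move/pcharf0P: char0 => ->.
have two0K : (2%:R : K) != 0 by rewrite -(rmorph_nat iota) fmorph_eq0.
have v2 : v 2%:R = 0 by rewrite -(rmorph_nat iota) (valuation_rmorph hv iotaR).
split=> [[f1R _] | nonlift].
- exact: lift_valuations_even hv AR res_aniso f1 g on_quadric two0K v2 f1R.
- exact: nonlift_pole hv AR res_aniso f1 g on_quadric nonlift.
Qed.
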